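(* Let $b\ge 2$ be an integer and $p\ge 5$ a prime. Then every extra-special $p$-group $G$ of order $p^{4b+1}$ admits a diagonal double Kodaira structure of non-strong type $(b,\,p)$.
   Context: Notation: $[x,y]=xyx^{-1}y^{-1}$; $o(x)$ is the order of $x$. Definition (diagonal double Kodaira structure). Let $G$ be a finite group and $b,n\ge 2$ integers. A diagonal double Kodaira structure of type $(b,n)$ on $G$ is a set of $4b+1$ elements $\mathsf{r}_{11},\mathsf{t}_{11},\dots,\mathsf{r}_{1b},\mathsf{t}_{1b},\mathsf{r}_{21},\mathsf{t}_{21},\dots,\mathsf{r}_{2b},\mathsf{t}_{2b},\mathsf{z}$ which generate $G$, with $o(\mathsf{z})=n$, satisfying the following relations for all $j,k\in\{1,\dots,b\}$: (Surface relations) $[\mathsf{r}_{1b}^{-1},\mathsf{t}_{1b}^{-1}]\,\mathsf{t}_{1b}^{-1}\,[\mathsf{r}_{1,b-1}^{-1},\mathsf{t}_{1,b-1}^{-1}]\,\mathsf{t}_{1,b-1}^{-1}\cdots[\mathsf{r}_{11}^{-1},\mathsf{t}_{11}^{-1}]\,\mathsf{t}_{11}^{-1}\,(\mathsf{t}_{11}\mathsf{t}_{12}\cdots\mathsf{t}_{1b})=\mathsf{z}$, $[\mathsf{r}_{21}^{-1},\mathsf{t}_{21}]\,\mathsf{t}_{21}\,[\mathsf{r}_{22}^{-1},\mathsf{t}_{22}]\,\mathsf{t}_{22}\cdots[\mathsf{r}_{2b}^{-1},\mathsf{t}_{2b}]\,\mathsf{t}_{2b}\,(\mathsf{t}_{2b}^{-1}\mathsf{t}_{2,b-1}^{-1}\cdots\mathsf{t}_{21}^{-1})=\mathsf{z}^{-1}$.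 (Action of $\mathsf{r}_{1j}$) $[\mathsf{r}_{1j},\mathsf{r}_{2k}]=1$ if $j<k$; $[\mathsf{r}_{1j},\mathsf{r}_{2j}]=1$; $[\mathsf{r}_{1j},\mathsf{r}_{2k}]=\mathsf{z}^{-1}\mathsf{r}_{2k}\mathsf{r}_{2j}^{-1}\mathsf{z}\mathsf{r}_{2j}\mathsf{r}_{2k}^{-1}$ if $j>k$; $[\mathsf{r}_{1j},\mathsf{t}_{2k}]=1$ if $j<k$; $[\mathsf{r}_{1j},\mathsf{t}_{2j}]=\mathsf{z}^{-1}$; $[\mathsf{r}_{1j},\mathsf{t}_{2k}]=[\mathsf{z}^{-1},\mathsf{t}_{2k}]$ if $j>k$; $[\mathsf{r}_{1j},\mathsf{z}]=[\mathsf{r}_{2j}^{-1},\mathsf{z}]$. (Action of $\mathsf{t}_{1j}$) $[\mathsf{t}_{1j},\mathsf{r}_{2k}]=1$ if $j<k$; $[\mathsf{t}_{1j},\mathsf{r}_{2j}]=\mathsf{t}_{2j}^{-1}\mathsf{z}\mathsf{t}_{2j}$; $[\mathsf{t}_{1j},\mathsf{r}_{2k}]=[\mathsf{t}_{2j}^{-1},\mathsf{z}]$ if $j>k$; $[\mathsf{t}_{1j},\mathsf{t}_{2k}]=1$ if $j<k$; $[\mathsf{t}_{1j},\mathsf{t}_{2j}]=[\mathsf{t}_{2j}^{-1},\mathsf{z}]$; $[\mathsf{t}_{1j},\mathsf{t}_{2k}]=\mathsf{t}_{2j}^{-1}\mathsf{z}\mathsf{t}_{2j}\mathsf{z}^{-1}\mathsf{t}_{2k}\mathsf{z}\mathsf{t}_{2j}^{-1}\mathsf{z}^{-1}\mathsf{t}_{2j}\mathsf{t}_{2k}^{-1}$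 if $j>k$; $[\mathsf{t}_{1j},\mathsf{z}]=[\mathsf{t}_{2j}^{-1},\mathsf{z}]$. Such a structure is of strong type $(b,n)$ if both $K_1:=\langle \mathsf{r}_{11},\mathsf{t}_{11},\dots,\mathsf{r}_{1b},\mathsf{t}_{1b},\mathsf{z}\rangle$ and $K_2:=\langle \mathsf{r}_{21},\mathsf{t}_{21},\dots,\mathsf{r}_{2b},\mathsf{t}_{2b},\mathsf{z}\rangle$ equal $G$, and of non-strong type otherwise. Definition. For a prime $p$, a finite $p$-group $G$ is extra-special if its center $Z(G)$ is cyclic of order $p$ and $G/Z(G)$ is a non-trivial elementary abelian $p$-group. *)

From HB Require Import structures.
From mathcomp Require Import all_boot all_fingroup all_solvable.
Set Implicit Arguments. Unset Strict Implicit. Unset Printing Implicit Defensive.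
Import GroupScope.

(* Paper's commutator convention: [x,y] = x y x^-1 y^-1
   (differs from mathcomp's [~ x, y] = x^-1 y^-1 x y). *)
Definition pcomm (gT : finGroupType) (x y : gT) : gT := x * y * x^-1 * y^-1.

Definition extra_special (p : nat) (gT : finGroupType) (G : {group gT}) : bool :=
  [&& prime p, p.-group G, cyclic 'Z(G), #|'Z(G)| == p,
      p.-abelem (G / 'Z(G)) & G / 'Z(G) != 1].

(* Generators r_{ij}, t_{ij} are given as functions nat -> gT, only the
   indices j in {1..b} being relevant. *)
Definition K1set (gT : finGroupType) (b : nat) (r1 t1 : nat -> gT) (z : gT)
  : {set gT} :=
  z |: [set x | [exists j : 'I_b, (x == r1 j.+1) || (x == t1 j.+1)]].

Definition K2set := K1set.

Definition all_gens (gT : finGroupType) (b : nat) (r1 t1 r2 t2 : nat -> gT)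
  (z : gT) : {set gT} := K1set b r1 t1 z :|: K2set b r2 t2 z.

Definition ddks (gT : finGroupType) (G : {group gT}) (b n : nat)
  (r1 t1 r2 t2 : nat -> gT) (z : gT) : Prop :=
  <<all_gens b r1 t1 r2 t2 z>> = G /\ #[z] = n /\
   (\prod_(0 <= i < b) (pcomm (r1 (b - i))^-1 (t1 (b - i))^-1 * (t1 (b - i))^-1))
     * (\prod_(1 <= j < b.+1) t1 j) = z /\
   (\prod_(1 <= j < b.+1) (pcomm (r2 j)^-1 (t2 j) * t2 j))
     * (\prod_(0 <= i < b) (t2 (b - i))^-1) = z^-1 /\
   forall j k, 1 <= j <= b -> 1 <= k <= b ->
   ((j < k -> pcomm (r1 j) (r2 k) = 1) /\
    (pcomm (r1 j) (r2 j) = 1) /\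
    (k < j -> pcomm (r1 j) (r2 k) = z^-1 * r2 k * (r2 j)^-1 * z * r2 j * (r2 k)^-1) /\
    (j < k -> pcomm (r1 j) (t2 k) = 1) /\
    (pcomm (r1 j) (t2 j) = z^-1) /\
    (k < j -> pcomm (r1 j) (t2 k) = pcomm z^-1 (t2 k)) /\
    (pcomm (r1 j) z = pcomm (r2 j)^-1 z)) /\
   ((j < k -> pcomm (t1 j) (r2 k) = 1) /\
    (pcomm (t1 j) (r2 j) = (t2 j)^-1 * z * t2 j) /\
    (k < j -> pcomm (t1 j) (r2 k) = pcomm (t2 j)^-1 z) /\
    (j < k -> pcomm (t1 j) (t2 k) = 1) /\
    (pcomm (t1 j) (t2 j) = pcomm (t2 j)^-1 z) /\
    (k < j -> pcomm (t1 j) (t2 k) =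
       (t2 j)^-1 * z * t2 j * z^-1 * t2 k * z * (t2 j)^-1 * z^-1 * t2 j * (t2 k)^-1) /\
    (pcomm (t1 j) z = pcomm (t2 j)^-1 z)).

Definition ddks_nonstrong (gT : finGroupType) (G : {group gT}) (b n : nat)
  (r1 t1 r2 t2 : nat -> gT) (z : gT) : Prop :=
  ddks G b n r1 t1 r2 t2 z /\
  ~ (<<K1set b r1 t1 z>> = G /\ <<K2set b r2 t2 z>> = G).

From HB Require Import structures.
From mathcomp Require Import all_boot all_fingroup all_solvable zify.
Set Implicit Arguments. Unset Strict Implicit. Unset Printing Implicit Defensive.

(* An extra-special group G of order p^(4b+1) with centre <z> has a symplectic
   basis x_1, y_1, ..., x_2b, y_2b: [x_i, y_k] = z if i = k and 1 otherwise,
   the x_i commute with each other and so do the y_i.  It is built by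
   repeatedly splitting off, as a central factor, the extra-special subgroup of
   order p^3 generated by a pair x, y with [x, y] = z.  Take r_1j = x_j,
   t_1j = x_(b+j), r_2j = y_(b+j), t_2j = y_j^-1, twisted by
   t_11 = y_1 x_(b+1) and r_22 = x_2^-1 y_(b+2).  Commutators are central and
   bilinear, so every relation reduces to the table of basis pairings, and the
   two twists make the surface products equal to z and z^-1.  Finally x_2
   commutes with all generators of K_1 but not with y_2, so K_1 <> G and the
   structure is non-strong. *)

Section Pcomm.
Variable gT : finGroupType.
Local Open Scope group_scope.
Implicit Types u v w x : gT.

Lemma pcomm_commg u v : pcomm u v = [~ u^-1, v^-1].
Proof. by rewrite /pcomm /commg /conjg !invgK !mulgA. Qed.

Lemma pcommC u v : pcomm u v = (pcomm v u)^-1.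
Proof. by rewrite /pcomm !invMg !invgK !mulgA. Qed.

Lemma pcomm1P u v : reflect (commute u v) (pcomm u v == 1).
Proof. by rewrite /pcomm -mulgA -invMg -eq_mulgV1; apply: eqP. Qed.

Lemma pcomm_eq1 u v : commute u v -> pcomm u v = 1.
Proof. by move/pcomm1P/eqP. Qed.

Lemma pcommV_mulV x u v : pcomm x^-1 (u * v^-1) = x^-1 * u * v^-1 * x * v * u^-1.
Proof. by rewrite /pcomm !invMg !invgK !mulgA. Qed.

Lemma pcomm_pcommV w x v :
  pcomm (pcomm w^-1 x) v = w^-1 * x * w * x^-1 * v * x * w^-1 * x^-1 * w * v^-1.
Proof. by rewrite /pcomm !invMg !invgK !mulgA. Qed.

End Pcomm.

Section ClassTwo.
Variables (gT : finGroupType) (G : {group gT}).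
Local Open Scope group_scope.
Hypothesis cGG : G^`(1) \subset 'Z(G).
Implicit Types u v w : gT.

Lemma pcomm_center u v : u \in G -> v \in G -> pcomm u v \in 'Z(G).
Proof. by move=> Gu Gv; rewrite pcomm_commg (subsetP cGG) ?mem_commg ?groupV. Qed.

Lemma pcommMl u v w : u \in G -> v \in G -> w \in G ->
  pcomm (u * v) w = pcomm u w * pcomm v w.
Proof.
move=> Gu Gv Gw; have Zvw := pcomm_center Gv Gw.
rewrite !pcomm_commg invMg commMgJ -!pcomm_commg conjgE.
rewrite -(centerC (groupVr Gu) Zvw) mulKg (centerC _ Zvw) //.
by rewrite (subsetP (center_sub G)) ?pcomm_center.
Qed.

Lemma pcommMr u v w : u \in G -> v \in G -> w \in G ->
  pcomm u (v * w) = pcomm u v * pcomm u w.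
Proof.
move=> Gu Gv Gw; rewrite pcommC pcommMl // invMg -!pcommC.
by rewrite (centerC _ (pcomm_center Gu Gv)) ?(subsetP (center_sub G)) ?pcomm_center.
Qed.

Lemma pcommVl u w : u \in G -> w \in G -> pcomm u^-1 w = (pcomm u w)^-1.
Proof.
move=> Gu Gw; apply/eqP; rewrite eq_mulgV1 invgK -pcommMl ?groupV // mulVg.
by rewrite pcomm_eq1 //; apply: commute_sym; apply: commute1.
Qed.

Lemma pcommVr u w : u \in G -> w \in G -> pcomm u w^-1 = (pcomm u w)^-1.
Proof. by move=> Gu Gw; rewrite pcommC pcommVl // -pcommC. Qed.

Lemma pcommXr u v m : u \in G -> v \in G -> pcomm u (v ^+ m) = pcomm u v ^+ m.
Proof.
move=> Gu Gv; elim: m => [|m IHm]; first by rewrite pcomm_eq1 //; apply: commute1.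
by rewrite !expgS pcommMr ?groupX // IHm.
Qed.

Lemma pcomm_scale z x y : 'Z(G) = <[z]> -> prime #[z] ->
  x \in G -> y \in G -> ~ commute x y -> exists m, pcomm x (y ^+ m) = z.
Proof.
move=> defZ z_pr Gx Gy ncxy; have Zc := pcomm_center Gx Gy; rewrite defZ in Zc.
have ntc : #[pcomm x y] != 1%N by rewrite order_eq1; apply/negP => /pcomm1P.
have oc : #[pcomm x y] = #[z].
  by apply/(prime_nt_dvdP z_pr ntc); rewrite cardSg ?cycle_subG.
have defc : <[pcomm x y]> = <[z]>.
  by apply/eqP; rewrite eqEcard cycle_subG Zc /=; apply: eq_leq; symmetry; exact: oc.
have /cycleP[m ->] : z \in <[pcomm x y]> by rewrite defc cycle_id.
by exists m; rewrite pcommXr.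
Qed.

End ClassTwo.

Section Products.
Variable gT : finGroupType.
Local Open Scope group_scope.

Lemma prod_nat_delta m n k (x : gT) : m <= k < n ->
  \prod_(m <= i < n) (if i == k then x else 1) = x.
Proof.
case/andP=> mk kn; rewrite (big_cat_nat mk (ltnW kn)) (big_ltn kn) eqxx.
have off_k j l : l <= j -> j <= k \/ k < l ->
    \prod_(l <= i < j) (if i == k then x else 1) = 1.
  by move=> lj jkl; rewrite big1_seq // => i; rewrite mem_index_iota; case: eqP => //; lia.
rewrite !off_k /=; [by rewrite mul1g mulg1 | lia..].
Qed.

Lemma prod_center_mul (G : {group gT}) (I : eqType) (s : seq I) (f g : I -> gT) :
  {in s, forall i, f i \in 'Z(G)} -> {in s, forall i, g i \in G} ->
  \prod_(i <- s) (f i * g i) = (\prod_(i <- s) f i) * \prod_(i <- s) g i.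
Proof.
elim: s => [|i s IHs] Zf Gg; first by rewrite !big_nil mulg1.
have Zfs : \prod_(j <- s) f j \in 'Z(G).
  by rewrite big_seq group_prod // => j sj; apply: Zf; rewrite inE sj orbT.
rewrite !big_cons IHs => [|j sj|j sj]; last 2 first.
- by apply: Zf; rewrite inE sj orbT.
- by apply: Gg; rewrite inE sj orbT.
by rewrite -!mulgA (mulgA (g i)) (centerC _ Zfs) ?Gg ?mem_head // !mulgA.
Qed.

Lemma invg_prod_nat n (t : nat -> gT) :
  (\prod_(1 <= j < n.+1) t j)^-1 = \prod_(0 <= i < n) (t (n - i))^-1.
Proof.
elim: n => [|n IHn]; first by rewrite !big_geq ?invg1.
rewrite big_nat_recr //= [RHS]big_nat_recl //= subn0 invMg IHn.
by congr (_ * _); apply: eq_big_nat => i _; rewrite subSS.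
Qed.

End Products.

Section GeneratorSets.
Variables (gT : finGroupType) (b : nat) (r t : nat -> gT) (z : gT).
Local Open Scope group_scope.

Lemma K1set_z : z \in K1set b r t z.
Proof. exact: setU11. Qed.

Lemma K1set_gen j : 0 < j <= b -> r j \in K1set b r t z /\ t j \in K1set b r t z.
Proof.
case/andP=> j_gt0 jb; have jb' : j.-1 < b by lia.
by split; apply/setU1P; right; rewrite inE; apply/existsP; exists (Ordinal jb');
  rewrite /= prednK // eqxx ?orbT.
Qed.

Lemma K1set_subset (A : {set gT}) : z \in A ->
  (forall j, 0 < j <= b -> r j \in A /\ t j \in A) -> K1set b r t z \subset A.
Proof.
move=> Az rtA; apply/subsetP=> x /setU1P[-> // |].
by rewrite inE => /existsP[[i ib] /orP[] /eqP ->]; case: (rtA i.+1 ib).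
Qed.

End GeneratorSets.

Section SymplecticBasis.
Variable gT : finGroupType.
Local Open Scope group_scope.

Record symplectic_basis (G : {group gT}) (z : gT) (n : nat) (xs ys : nat -> gT) :
    Prop := SymplecticBasis {
  basis_mem : forall i, 0 < i <= n -> xs i \in G /\ ys i \in G;
  basis_pcomm : forall i k, 0 < i <= n -> 0 < k <= n ->
    pcomm (xs i) (ys k) = if i == k then z else 1;
  basis_commute : forall i k, 0 < i <= n -> 0 < k <= n ->
    commute (xs i) (xs k) /\ commute (ys i) (ys k);
  basis_gen : forall H : {group gT}, z \in H ->
    (forall i, 0 < i <= n -> xs i \in H /\ ys i \in H) -> G \subset H }.

Variable z : gT.
Implicit Types (G E R : {group gT}) (x y : gT).

Lemma symplectic_basis0 G (xs ys : nat -> gT) :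
  G \subset <[z]> -> symplectic_basis G z 0 xs ys.
Proof.
move=> sGz; split=> [i|i k|i k|H Hz _]; last by rewrite (subset_trans sGz) ?cycle_subG.
all: by rewrite ltnNge => /andP[/negP].
Qed.

Lemma symplectic_basis_cprod G R n x y xs ys :
  <<[set x; y]>> \* R = G -> pcomm x y = z -> symplectic_basis R z n xs ys ->
  symplectic_basis G z n.+1 (fun i => if i == n.+1 then x else xs i)
                            (fun i => if i == n.+1 then y else ys i).
Proof.
case/cprodP=> _ defG cER pxy [Rmem Rpcomm Rcomm Rgen].
have [sEG sRG] : <<[set x; y]>> \subset G /\ R \subset G.
  by rewrite -defG mulG_subl ?mulG_subr.
have [Ex Ey] : x \in <<[set x; y]>> /\ y \in <<[set x; y]>>.
  by rewrite !mem_gen ?set21 ?set22.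
have cRE u v : u \in R -> v \in <<[set x; y]>> -> commute u v.
  by move=> Ru; apply/centP; apply: (subsetP cER).
have old i : 0 < i <= n.+1 -> i != n.+1 -> 0 < i <= n.
  by move=> ? ?; lia.
split=> [i Ii | i k Ii Ik | i k Ii Ik | H Hz HG].
- case: eqP => [_ | /eqP ni]; first by rewrite !(subsetP sEG).
  by have [/(subsetP sRG) -> /(subsetP sRG) ->] := Rmem i (old i Ii ni).
- have [Rxi Ryk] : (i != n.+1 -> xs i \in R) /\ (k != n.+1 -> ys k \in R).
    by split=> [ni | nk]; [case: (Rmem i) | case: (Rmem k)]; rewrite ?old.
  rewrite /=; case: (eqVneq k n.+1) => [-> | nk]; case: (eqVneq i n.+1) => [ei | ni];
    rewrite ?ei //=.
  + by rewrite pcomm_eq1 //; apply: cRE; rewrite ?Rxi.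
  + rewrite eq_sym (negPf nk) pcomm_eq1 //.
    by apply: commute_sym; apply: cRE; rewrite ?Ryk.
  + exact: Rpcomm (old i Ii ni) (old k Ik nk).
- have [Rxi Rxk] : (i != n.+1 -> xs i \in R /\ ys i \in R) /\
                   (k != n.+1 -> xs k \in R /\ ys k \in R).
    by split=> ne; apply: Rmem; apply: old.
  rewrite /=; case: (eqVneq k n.+1) => [_ | nk]; case: (eqVneq i n.+1) => [_ | ni] //.
  + by split; apply: cRE; case: Rxi.
  + by split; apply: commute_sym; apply: cRE; case: Rxk.
  + exact: Rcomm (old i Ii ni) (old k Ik nk).
- have [Hx Hy] := HG n.+1 (leqnn _); rewrite eqxx in Hx Hy.
  rewrite -defG mulG_subG gen_subG subUset !sub1set Hx Hy /=.
  apply: Rgen => // i Ii; have ni : i != n.+1 by lia.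
  by have := HG i; rewrite (negPf ni); apply; lia.
Qed.

Lemma gen_noncommuting_p3 (p : nat) E x y : p.-group E -> #|E| = (p ^ 3)%N ->
  x \in E -> y \in E -> ~ commute x y -> <<[set x; y]>> = E.
Proof.
move=> pE oE Ex Ey ncxy; set J := <<[set x; y]>>.
have sJE : J \subset E by rewrite gen_subG subUset !sub1set Ex Ey.
have ncJ : ~~ abelian J.
  by apply/negP=> /centsP cJJ; apply: ncxy; apply: cJJ; rewrite mem_gen ?set21 ?set22.
have pJ := pgroupS sJE pE.
have logJ : 2 < logn p #|J| by rewrite ltnNge; apply: contra ncJ; apply: p2group_abelian.
apply/eqP; rewrite eqEcard sJE oE /= dvdn_leq ?cardG_gt0 //.
by rewrite (card_pgroup pJ) dvdn_exp2l.
Qed.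

Lemma extraspecial_split_pair (p : nat) G : p.-group G -> extraspecial G ->
    'Z(G) = <[z]> ->
  exists x y R, [/\ <<[set x; y]>> \* R = G, pcomm x y = z,
    #|R| = #|G| %/ p ^ 2, 'Z(R) = 'Z(G) &
    if abelian R then R :=: 'Z(G) else extraspecial R].
Proof.
move=> pG esG defZ; have [[_ defG'] _] := esG.
have cGG : G^`(1) \subset 'Z(G) by rewrite defG'.
have z_pr : prime #[z].
  by rewrite orderE -defZ (card_center_extraspecial pG esG) (extraspecial_prime pG esG).
have /subsetPn[x Gx notZx] : ~~ (G \subset 'Z(G)).
  apply: contra (extraspecial_nonabelian esG) => sGZ.
  exact: subset_trans sGZ (subsetIr _ _).
have GZx : x \in G :\: 'Z(G) by rewrite inE notZx.
have [E [R [[oE oR] [defG _] [defZE defZR] [_ Ex] esR]]] := split1_extraspecial pG esG GZx.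
have sEG : E \subset G by case/cprodP: defG => _ <- _; apply: mulG_subl.
have /subsetPn[y Ey /cent1P ncyx] : ~~ (E \subset 'C[x]).
  by rewrite sub_cent1; apply: contra notZx => cEx; rewrite -defZE inE Ex.
have ncxy : ~ commute x y by move/commute_sym.
have [m pxy] := pcomm_scale cGG defZ z_pr Gx (subsetP sEG y Ey) ncxy.
have defE : <<[set x; y ^+ m]>> = E.
  apply: gen_noncommuting_p3 (pgroupS sEG pG) oE Ex (groupX m Ey) _ => /pcomm_eq1.
  by rewrite pxy => z1; move: z_pr; rewrite z1 order1.
by exists x, (y ^+ m), R; rewrite defE.
Qed.

Lemma extraspecial_symplectic_basis (p n : nat) G : p.-group G -> extraspecial G ->
  #|G| = (p ^ n.*2.+1)%N -> 'Z(G) = <[z]> -> exists xs ys, symplectic_basis G z n xs ys.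
Proof.
elim: n G => [|n IHn] G pG esG oG defZ; have p_gt1 := prime_gt1 (extraspecial_prime pG esG).
  by have := min_card_extraspecial pG esG; rewrite oG leq_exp2l.
have [x [y [R [defG pxy oR defZR esR]]]] := extraspecial_split_pair pG esG defZ.
have oR' : #|R| = (p ^ n.*2.+1)%N.
  by rewrite oR oG -expnB 1?ltnW //; congr (_ ^ _)%N; lia.
have [xs [ys BR]] : exists xs ys, symplectic_basis R z n xs ys.
  move: esR; case: ifP => [_ defR | _ esR].
    have n0 : n = 0.
      apply/eqP; rewrite -double_eq0 -eqSS -(eqn_exp2l _ _ p_gt1) -oR' defR.
      by rewrite (card_center_extraspecial pG esG).
    by exists (fun=> 1), (fun=> 1); rewrite n0; apply: symplectic_basis0; rewrite defR defZ.
  apply: IHn; rewrite ?defZR // (pgroupS _ pG) //.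
  by case/cprodP: defG => _ <- _; apply: mulG_subr.
exists (fun i => if i == n.+1 then x else xs i), (fun i => if i == n.+1 then y else ys i).
exact: symplectic_basis_cprod pxy BR.
Qed.

End SymplecticBasis.

Section DoubleKodaira.
Variables (gT : finGroupType) (G : {group gT}) (z : gT) (b : nat) (xs ys : nat -> gT).
Local Open Scope group_scope.
Hypotheses (cGG : G^`(1) \subset 'Z(G)) (ntz : z != 1) (b_gt1 : 1 < b).
Hypothesis B : symplectic_basis G z (b + b) xs ys.

(* When rewriting membership or range side conditions, use the [hi] forms
   before the [lo] ones: [x_lo] also matches [xs (b + j)], leaving the false
   side condition [0 < b + j <= b]. *)
Let lo j : 0 < j <= b -> 0 < j <= b + b. Proof. by move=> ?; lia. Qed.
Let hi j : 0 < j <= b -> 0 < b + j <= b + b. Proof. by move=> ?; lia. Qed.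

Let x_lo j : 0 < j <= b -> xs j \in G. Proof. by move/lo/(basis_mem B) => []. Qed.
Let y_lo j : 0 < j <= b -> ys j \in G. Proof. by move/lo/(basis_mem B) => []. Qed.
Let x_hi j : 0 < j <= b -> xs (b + j) \in G. Proof. by move/hi/(basis_mem B) => []. Qed.
Let y_hi j : 0 < j <= b -> ys (b + j) \in G. Proof. by move/hi/(basis_mem B) => []. Qed.

Let pcomm_xy_lo j k : 0 < j <= b -> 0 < k <= b ->
  pcomm (xs j) (ys k) = if j == k then z else 1.
Proof. by move=> /lo Ij /lo Ik; rewrite (basis_pcomm B). Qed.
Let pcomm_xy_hi j k : 0 < j <= b -> 0 < k <= b ->
  pcomm (xs (b + j)) (ys (b + k)) = if j == k then z else 1.
Proof. by move=> /hi Ij /hi Ik; rewrite (basis_pcomm B) // eqn_add2l. Qed.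
Let pcomm_xy_lohi j k : 0 < j <= b -> 0 < k <= b -> pcomm (xs j) (ys (b + k)) = 1.
Proof. by move=> Ij Ik; rewrite (basis_pcomm B (lo Ij) (hi Ik)) ifN //; apply/eqP; lia. Qed.
Let pcomm_xy_hilo j k : 0 < j <= b -> 0 < k <= b -> pcomm (xs (b + j)) (ys k) = 1.
Proof. by move=> Ij Ik; rewrite (basis_pcomm B (hi Ij) (lo Ik)) ifN //; apply/eqP; lia. Qed.
Let pcomm_xx j k : 0 < j <= b + b -> 0 < k <= b + b -> pcomm (xs j) (xs k) = 1.
Proof. by move=> Ij Ik; apply: pcomm_eq1; case: (basis_commute B Ij Ik). Qed.
Let pcomm_yy j k : 0 < j <= b + b -> 0 < k <= b + b -> pcomm (ys j) (ys k) = 1.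
Proof. by move=> Ij Ik; apply: pcomm_eq1; case: (basis_commute B Ij Ik). Qed.

Let r1 j := xs j.
Let t1 j := if j == 1%N then ys 1%N * xs (b + 1) else xs (b + j).
Let r2 j := if j == 2 then (xs 2)^-1 * ys (b + 2) else ys (b + j).
Let t2 j := (ys j)^-1.

Let I1 : 0 < 1 <= b. Proof. exact: ltnW. Qed.
Let I2 : 0 < 2 <= b. Proof. exact: b_gt1. Qed.

Let gens_mem j : 0 < j <= b -> [/\ r1 j \in G, t1 j \in G, r2 j \in G & t2 j \in G].
Proof.
move=> Ij; split; rewrite /r1 /t1 /r2 /t2 ?groupV ?x_lo ?y_lo //.
  by case: ifP => _; rewrite ?groupM ?x_hi ?y_lo ?I1.
by case: ifP => _; rewrite ?groupM ?groupV ?x_lo ?y_hi.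
Qed.

Let pcomm_r1_r2 j k : 0 < j <= b -> 0 < k <= b -> pcomm (r1 j) (r2 k) = 1.
Proof.
move=> Ij Ik; rewrite /r1 /r2; case: ifP => _; last exact: pcomm_xy_lohi.
rewrite (pcommMr cGG) ?groupV ?y_hi ?x_lo // (pcommVr cGG) ?x_lo //.
by rewrite pcomm_xx ?lo // pcomm_xy_lohi // invg1 mulg1.
Qed.

Let pcomm_r1_t2 j k : 0 < j <= b -> 0 < k <= b ->
  pcomm (r1 j) (t2 k) = if j == k then z^-1 else 1.
Proof.
move=> Ij Ik; rewrite /r1 /t2 (pcommVr cGG) ?x_lo ?y_lo // pcomm_xy_lo //.
by case: ifP; rewrite ?invg1.
Qed.

Let pcomm_xhi_r2 j k : 0 < j <= b -> 0 < k <= b ->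
  pcomm (xs (b + j)) (r2 k) = if j == k then z else 1.
Proof.
move=> Ij Ik; rewrite /r2; case: (eqVneq k 2) => [-> | _] /=; last exact: pcomm_xy_hi.
rewrite (pcommMr cGG) ?groupV ?x_hi ?y_hi ?x_lo // (pcommVr cGG) ?x_hi ?x_lo //.
by rewrite pcomm_xx ?hi ?lo // invg1 mul1g pcomm_xy_hi.
Qed.

Let pcomm_y1_r2 k : 0 < k <= b -> pcomm (ys 1) (r2 k) = 1.
Proof.
move=> Ik; rewrite /r2; case: ifP => _; last by rewrite pcomm_yy ?hi ?lo.
rewrite (pcommMr cGG) ?groupV ?y_hi ?x_lo ?y_lo // (pcommVr cGG) ?x_lo ?y_lo //.
by rewrite pcomm_yy ?hi ?lo // pcommC pcomm_xy_lo // !invg1 mulg1.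
Qed.

Let pcomm_t1_r2 j k : 0 < j <= b -> 0 < k <= b ->
  pcomm (t1 j) (r2 k) = if j == k then z else 1.
Proof.
move=> Ij Ik; have [_ _ Gr2 _] := gens_mem Ik.
rewrite /t1; case: (eqVneq j 1%N) => [-> | _] /=; last exact: pcomm_xhi_r2.
by rewrite (pcommMl cGG) ?x_hi ?y_lo // pcomm_y1_r2 // mul1g pcomm_xhi_r2.
Qed.

Let pcomm_t1_t2 j k : 0 < j <= b -> 0 < k <= b -> pcomm (t1 j) (t2 k) = 1.
Proof.
move=> Ij Ik; have [_ Gt1 _ _] := gens_mem Ij.
rewrite /t2 (pcommVr cGG) ?y_lo // /t1; case: ifP => _; last by rewrite pcomm_xy_hilo ?invg1.
by rewrite (pcommMl cGG) ?x_hi ?y_lo // pcomm_yy ?lo // pcomm_xy_hilo // mulg1 invg1.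
Qed.

Let pcomm_r1_t1 j : 0 < j <= b -> pcomm (r1 j) (t1 j) = if j == 1%N then z else 1.
Proof.
move=> Ij; rewrite /r1 /t1; case: (eqVneq j 1%N) => [-> | _] /=.
  by rewrite (pcommMr cGG) ?x_hi ?x_lo ?y_lo // pcomm_xy_lo // pcomm_xx ?hi ?lo // mulg1.
by rewrite pcomm_xx ?hi ?lo.
Qed.

Let pcomm_r2_t2 j : 0 < j <= b -> pcomm (r2 j) (t2 j) = if j == 2 then z else 1.
Proof.
move=> Ij; rewrite /r2 /t2; case: (eqVneq j 2) => [-> | _] /=.
  rewrite (pcommMl cGG) ?groupV ?y_hi ?x_lo ?y_lo //.
  rewrite (pcommVl cGG) ?groupV ?x_lo ?y_lo //.
  rewrite (pcommVr cGG) ?x_lo ?y_lo // invgK pcomm_xy_lo // (pcommVr cGG) ?y_hi ?y_lo //.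
  by rewrite pcomm_yy ?hi ?lo // invg1 mulg1.
by rewrite (pcommVr cGG) ?y_hi ?y_lo // pcomm_yy ?hi ?lo // invg1.
Qed.

Let surface1 :
  (\prod_(0 <= i < b) (pcomm (r1 (b - i))^-1 (t1 (b - i))^-1 * (t1 (b - i))^-1))
    * (\prod_(1 <= j < b.+1) t1 j) = z.
Proof.
have Ib i : i \in index_iota 0 b -> 0 < b - i <= b.
  by rewrite mem_index_iota => ?; lia.
rewrite (prod_center_mul (G := G)) => [|i /(Ib i) Ii|i /(Ib i) Ii]; first last.
- by have [_ Gt1 _ _] := gens_mem Ii; rewrite groupV.
- by have [Gr1 Gt1 _ _] := gens_mem Ii; rewrite (pcomm_center cGG) ?groupV.
rewrite -invg_prod_nat mulgKV -(prod_nat_delta z (_ : 0 <= b.-1 < b)); last by lia.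
apply: eq_big_nat => i ib; have Ii : 0 < b - i <= b by lia.
have [Gr1 Gt1 _ _] := gens_mem Ii.
rewrite (pcommVl cGG) ?groupV // (pcommVr cGG) // invgK pcomm_r1_t1 //.
by congr (if _ then _ else _); apply/eqP/eqP; lia.
Qed.

Let surface2 :
  (\prod_(1 <= j < b.+1) (pcomm (r2 j)^-1 (t2 j) * t2 j))
    * (\prod_(0 <= i < b) (t2 (b - i))^-1) = z^-1.
Proof.
have Ib j : j \in index_iota 1 b.+1 -> 0 < j <= b by rewrite mem_index_iota.
rewrite (prod_center_mul (G := G)) => [|j /(Ib j) Ij|j /(Ib j) Ij]; first last.
- by have [_ _ _ Gt2] := gens_mem Ij.
- by have [_ _ Gr2 Gt2] := gens_mem Ij; apply: (pcomm_center cGG) (groupVr Gr2) Gt2.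
rewrite -invg_prod_nat mulgK -(prod_nat_delta z^-1 (_ : 1 <= 2 < b.+1)) //.
apply: eq_big_nat => j Ij; have [_ _ Gr2 Gt2] := gens_mem Ij.
by rewrite (pcommVl cGG) // pcomm_r2_t2 //; case: ifP; rewrite ?invg1.
Qed.

Let Zz : z \in 'Z(G).
Proof.
by have := pcomm_xy_lo I1 I1; rewrite eqxx => <-; rewrite (pcomm_center cGG) ?x_lo ?y_lo.
Qed.

Let xs_hi_t1 j : xs (b + j) = if j == 1%N then t2 1%N * t1 1%N else t1 j.
Proof. by rewrite /t1 /t2; case: (eqVneq j 1%N) => [-> | _] //=; rewrite mulKg. Qed.

Let ys_hi_r2 j : ys (b + j) = if j == 2 then r1 2 * r2 2 else r2 j.
Proof. by rewrite /r1 /r2; case: (eqVneq j 2) => [-> | _] //=; rewrite mulKVg. Qed.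

Let gens_in j : 0 < j <= b ->
  [/\ r1 j \in <<all_gens b r1 t1 r2 t2 z>>, t1 j \in <<all_gens b r1 t1 r2 t2 z>>,
       r2 j \in <<all_gens b r1 t1 r2 t2 z>> & t2 j \in <<all_gens b r1 t1 r2 t2 z>>].
Proof.
move=> Ij; have [r1K t1K] := K1set_gen r1 t1 z Ij; have [r2K t2K] := K1set_gen r2 t2 z Ij.
by split; apply: mem_gen; rewrite inE ?r1K ?t1K ?r2K ?t2K ?orbT.
Qed.

Let gen_all_gens : <<all_gens b r1 t1 r2 t2 z>> = G.
Proof.
apply/eqP; have Gz := subsetP (center_sub G) _ Zz.
rewrite eqEsubset gen_subG subUset !K1set_subset // => [|j Ij|j Ij]; first last.
- by have [] := gens_mem Ij.
- by have [] := gens_mem Ij.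
apply: (basis_gen B); first by rewrite mem_gen // inE K1set_z.
move=> i Ii; have [ib | bi] := leqP i b.
  have Ii' : 0 < i <= b by lia.
  have [r1A _ _ t2A] := gens_in Ii'.
  by split; last rewrite -[ys i]invgK groupV.
have [j -> Ij] : exists2 j, i = b + j & 0 < j <= b by exists (i - b); lia.
have [_ t1A r2A _] := gens_in Ij.
have [_ t11A _ t21A] := gens_in I1; have [r12A _ r22A _] := gens_in I2.
by rewrite xs_hi_t1 ys_hi_r2; split; case: ifP => _ //; apply: groupM.
Qed.

Let commute_xx j k : 0 < j <= b + b -> 0 < k <= b + b -> commute (xs j) (xs k).
Proof. by move=> Ij Ik; case: (basis_commute B Ij Ik). Qed.

Let K1set_cent : K1set b r1 t1 z \subset 'C[xs 2].
Proof.
apply: K1set_subset => [|j Ij]; first by apply/cent1P/commute_sym/(centerC (x_lo I2) Zz).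
split; apply/cent1P; rewrite /r1 /t1; first by apply: commute_xx; rewrite ?lo.
case: ifP => _; last by apply: commute_xx; rewrite ?hi ?lo.
apply: commute_sym; apply: commuteM; last by apply: commute_xx; rewrite ?hi ?lo.
by apply/pcomm1P; rewrite pcomm_xy_lo.
Qed.

Let K1_proper : <<K1set b r1 t1 z>> != G.
Proof.
apply: contra ntz => /eqP defK1.
have : ys 2 \in 'C[xs 2] by apply: (subsetP _ _ (y_lo I2)); rewrite -defK1 gen_subG K1set_cent.
by move/cent1P/commute_sym/pcomm_eq1; rewrite pcomm_xy_lo // eqxx => ->.
Qed.

Lemma symplectic_basis_ddks_nonstrong :
  exists r1 t1 r2 t2, ddks_nonstrong G b #[z] r1 t1 r2 t2 z.
Proof.
exists r1, t1, r2, t2; split; last by case=> defK1 _; move/eqP: K1_proper.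
split; first exact: gen_all_gens.
split=> //; split; first exact: surface1.
split; first exact: surface2.
move=> j k Ij Ik; have [Gr1j Gt1j Gr2j Gt2j] := gens_mem Ij.
have [_ _ Gr2k Gt2k] := gens_mem Ik.
have cz w : w \in G -> commute w z by move=> Gw; apply: (centerC Gw Zz).
have pcomm_z w : w \in G -> pcomm w z = 1 by move/cz/pcomm_eq1.
have pcomm_zV w : w \in G -> pcomm z^-1 w = 1.
  by move=> Gw; apply/pcomm_eq1/commute_sym/commuteV/cz.
have [Gr2j' Gt2j'] := (groupVr Gr2j, groupVr Gt2j).
rewrite !pcomm_z //; split; do !split.
- by move=> _; apply: pcomm_r1_r2.
- exact: pcomm_r1_r2.
- by move=> _; rewrite -pcommV_mulV pcomm_zV ?groupM // pcomm_r1_r2.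
- by move=> jk; rewrite pcomm_r1_t2 // ltn_eqF.
- by rewrite pcomm_r1_t2 // eqxx.
- by move=> kj; rewrite pcomm_zV // pcomm_r1_t2 // gtn_eqF.
- by move=> jk; rewrite pcomm_t1_r2 // ltn_eqF.
- by rewrite pcomm_t1_r2 // eqxx -mulgA -(cz _ Gt2j) mulKg.
- by move=> kj; rewrite pcomm_t1_r2 // gtn_eqF.
- by move=> _; apply: pcomm_t1_t2.
- exact: pcomm_t1_t2.
- move=> _; rewrite -pcomm_pcommV pcomm_z // pcomm_t1_t2 // pcomm_eq1 //.
  exact/commute_sym/commute1.
Qed.

End DoubleKodaira.

Section ExtraSpecial.
Variable gT : finGroupType.
Local Open Scope group_scope.

Lemma extra_special_extraspecial (p : nat) (G : {group gT}) :
  extra_special p G -> p.-group G /\ extraspecial G.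
Proof.
case/and5P=> p_pr pG _ /eqP oZ /andP[abelQ ntQ]; split=> //.
have nZG : G \subset 'N('Z(G)) := normal_norm (center_normal G).
have sG'Z : G^`(1) \subset 'Z(G) by rewrite der1_min ?(abelem_abelian abelQ).
have ntG' : #|G^`(1)| != 1%N.
  rewrite -trivg_card1; apply: contraNneq ntQ => /derG1P/center_idP defZ.
  by rewrite defZ trivg_quotient.
have defG' : G^`(1) = 'Z(G).
  apply/eqP; rewrite eqEcard sG'Z oZ /=.
  by have /(prime_nt_dvdP p_pr ntG') -> : #|G^`(1)| %| p by rewrite -oZ cardSg.
split; last by rewrite oZ.
split=> //; apply/eqP.
by rewrite eqEsubset (Phi_min pG nZG abelQ) -defG' (Phi_joing pG) joing_subl.
Qed.

End ExtraSpecial.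

Theorem theorem2p10 (b p : nat) (hb : 2 <= b) (hp : prime p) (hp5 : 5 <= p)
  (gT : finGroupType) (G : {group gT}) :
  extra_special p G -> #|G| = p ^ (4 * b + 1) ->
  exists (r1 t1 r2 t2 : nat -> gT) (z : gT), ddks_nonstrong G b p r1 t1 r2 t2 z.
Proof.
move=> esp oG; have [pG esG] := extra_special_extraspecial esp.
have [[_ defG'] _] := esG.
have cGG : (G^`(1) \subset 'Z(G))%g by rewrite defG'.
have /cyclicP[z defZ] : cyclic 'Z(G)%g by case/and5P: esp.
have oz : #[z]%g = p by rewrite orderE -defZ (card_center_extraspecial pG esG).
have oG' : #|G| = (p ^ (b + b).*2.+1)%N by rewrite oG; congr (_ ^ _)%N; lia.
have [xs [ys B]] := extraspecial_symplectic_basis pG esG oG' defZ.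
have ntz : (z != 1)%g by rewrite -order_eq1 oz; case: eqP hp => // ->.
have [r1 [t1 [r2 [t2 K]]]] := symplectic_basis_ddks_nonstrong cGG ntz hb B.
by exists r1, t1, r2, t2, z; rewrite -oz.
Qed.
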